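(* Let $mG$ be a finite $|N|$-player canonical misinformation game on $|S|$ strategies. Then the Stable Set $\mathcal{AD}^\infty(\{mG\})$ is finite.
   Context: A normal-form game is $G=\langle N,S,P\rangle$ with finite players $N$, finite pure strategy sets $S_i$, positions $S=\times_i S_i$, payoffs $P_i:S\to\mathbb{R}$. A misinformation game $mG=\langle G^0,G^1,\dots,G^{|N|}\rangle$ consists of the actual game $G^0$ and subjective games $G^i$; it is canonical if all $G^i=\langle N,S,P^i\rangle$ differ from $G^0$ only in payoffs and in every $G^i$ all players have equally many pure strategies. $NME(mG)$ is the set of profiles $\sigma=(\sigma_1,\dots,\sigma_{|N|})$ such that each $\sigma_i$ is player $i$'s component of some Nash equilibrium of $G^i$. $\chi(\sigma)=\mathrm{supp}(\sigma_1)\times\dots\times\mathrm{supp}(\sigma_{|N|})$. For $\vec v\in S$, $mG_{\vec v}$ is obtained by replacing, in every $P^i$ ($i\ge1$), the payoff vector at position $\vec v$ by $P^0(\vec v)$. For a set $M$ of misinformation games, $\mathcal{AD}(M)=\{mG_{\vec u}: mG\in M,\sigma\in NME(mG),\vec u\in\chi(\sigma)\}$, $\mathcal{AD}^{(0)}(M)=M$, $\mathcal{AD}^{(t+1)}(M)=\mathcal{AD}^{(t)}(\mathcal{AD}(M))$. The length $\mathfrak{L}$ is the least $t\ge0$ with $\mathcal{AD}^{(t+1)}(M)=\mathcal{AD}^{(t)}(M)$, and the Stable Set is $\mathcal{AD}^\infty(M)=\mathcal{AD}^{(\mathfrak{L})}(M)$. *)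

From mathcomp Require Import all_boot all_order all_algebra.
From mathcomp Require Import boolp classical_sets cardinality reals.
Set Implicit Arguments. Unset Strict Implicit. Unset Printing Implicit Defensive.
Import Order.TTheory GRing.Theory Num.Theory.
Local Open Scope ring_scope.
Local Open Scope classical_set_scope.

Section MisGames.
Variables (R : realType) (n m : nat).
(* players are 'I_n; canonical: every player has the same m pure strategies 'I_m *)
Definition position := {ffun 'I_n -> 'I_m}.
Definition payoff := position -> 'I_n -> R.

Record mgame := MGame { actual : payoff ; subj : 'I_n -> payoff }.

Definition mixed_strategy (x : 'I_m -> R) : Prop :=
  (forall k, 0 <= x k) /\ \sum_(k < m) x k = 1.

Definition profile := 'I_n -> 'I_m -> R.

Definition mixed_profile (s : profile) : Prop := forall i, mixed_strategy (s i).

Definition exp_payoff (P : payoff) (s : profile) (i : 'I_n) : R :=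
  \sum_(v : position) (\prod_(j < n) s j (v j)) * P v i.

Definition deviate (s : profile) (i : 'I_n) (x : 'I_m -> R) : profile :=
  fun j => if j == i then x else s j.

Definition nash (P : payoff) (s : profile) : Prop :=
  mixed_profile s /\
  forall i x, mixed_strategy x -> exp_payoff P (deviate s i x) i <= exp_payoff P s i.

Definition NME (g : mgame) : set profile :=
  [set s | forall i, exists t, nash (subj g i) t /\ s i = t i].

Definition chi (s : profile) : set position :=
  [set v | forall i, 0 < s i (v i)].

Definition update (g : mgame) (v : position) : mgame :=
  MGame (actual g) (fun i w => if w == v then actual g v else subj g i w).

Definition AD (M : set mgame) : set mgame :=
  [set h | exists g, M g /\ exists s, NME g s /\ exists u, chi s u /\ h = update g u].

Fixpoint ADiter (t : nat) (M : set mgame) : set mgame :=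
  match t with
  | 0 => M
  | t'.+1 => ADiter t' (AD M)
  end.

Definition is_length (M : set mgame) (L : nat) : Prop :=
  ADiter L.+1 M = ADiter L M /\ forall t, ADiter t.+1 M = ADiter t M -> (L <= t)%N.

End MisGames.

From mathcomp Require Import all_boot all_order all_algebra.
From mathcomp Require Import boolp classical_sets cardinality reals.

(* Every AD-step either leaves the game unchanged or corrects one position
   at which some subjective payoff still differs from the actual one, so it
   strictly shrinks the finite set of such disagreement positions.  Hence a
   chain of more than d steps (d = initial number of disagreements) contains
   a stationary step, which may be dropped or repeated: the iterates of AD
   are stationary from d + 1 on.  Moreover every game reached from g is g
   with the payoffs corrected on some set of positions, and there are only
   finitely many such sets. *)

Set Implicit Arguments. Unset Strict Implicit. Unset Printing Implicit Defensive.
Local Open Scope classical_set_scope.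

Lemma exists_length (R : realType) (n m : nat) (M : set (mgame R n m)) :
  (exists t, ADiter t.+1 M = ADiter t M) -> exists L, is_length M L.
Proof.
move=> [t Ht].
have ex : exists t, `[< ADiter t.+1 M = ADiter t M >] by exists t; apply/asboolP.
case: (ex_minnP ex) => L /asboolP HL Lmin.
by exists L; split=> // s Hs; apply: Lmin; apply/asboolP.
Qed.

Section Stabilization.
Variables (R : realType) (n m : nat).
Local Notation game := (mgame R n m).
Local Notation pos := (position n m).

Definition ad_step (g h : game) : Prop :=
  exists s, NME g s /\ exists u, chi s u /\ h = update g u.

Fixpoint ad_reach (t : nat) (g h : game) : Prop :=
  match t with
  | 0 => h = g
  | t'.+1 => exists g', ad_step g g' /\ ad_reach t' g' h
  end.

Lemma ADiterE t (M : set game) h :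
  ADiter t M h <-> exists2 g, M g & ad_reach t g h.
Proof.
elim: t M h => [|t IH] M h /=; first by split=> [Mh|[g Mg ->]]; first exists h.
rewrite IH; split.
  move=> [_ [g [Mg [s [Ns [u [cu ->]]]]]] rh].
  by exists g => //; exists (update g u); split=> //; exists s; split=> //; exists u.
move=> [g Mg [_ [[s [Ns [u [cu ->]]]] rh]]].
by exists (update g u) => //; exists g; split=> //; exists s; split=> //; exists u.
Qed.

Definition disagreement (g : game) : {set pos} :=
  [set v | [exists i, exists j, subj g i v j != actual g v j]].

Lemma disagreement_update g u : disagreement (update g u) = disagreement g :\ u.
Proof.
apply/setP => v; rewrite !inE /=.
case: (v =P u) => [->|_] //=.
by apply/negbTE; rewrite negb_exists; apply/forallP => i;
  rewrite negb_exists; apply/forallP => j; rewrite negbK.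
Qed.

Lemma update_id g u : u \notin disagreement g -> update g u = g.
Proof.
rewrite inE negb_exists => /forallP agree.
case: g agree => a s /= agree; congr MGame.
apply/funext => i; apply/funext => w; case: (w =P u) => [->|] //.
apply/funext => j; move: (agree i); rewrite negb_exists => /forallP /(_ j).
by rewrite negbK => /eqP.
Qed.

Lemma ad_step_fix_or_shrink g h :
  ad_step g h -> h = g \/ (#|disagreement h| < #|disagreement g|)%N.
Proof.
move=> [_ [_ [u [_ ->]]]].
case: (boolP (u \in disagreement g)) => ug; last by left; apply: update_id.
by right; rewrite disagreement_update [in X in (_ < X)%N](cardsD1 u) ug.
Qed.

Lemma ad_reach_drop_fixed t g h :
  (#|disagreement g| < t)%N -> ad_reach t.+1 g h -> ad_reach t g h.
Proof.
elim: t g h => [|t IH] g h // dg [g' [sg rh]].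
case: (ad_step_fix_or_shrink sg) => [E|lt]; first by rewrite E in rh.
by exists g'; split=> //; apply: IH => //; apply: leq_trans lt _.
Qed.

Lemma ad_reach_repeat_fixed t g h :
  (#|disagreement g| < t)%N -> ad_reach t g h -> ad_reach t.+1 g h.
Proof.
elim: t g h => [|t IH] g h // dg [g' [sg rh]].
case: (ad_step_fix_or_shrink sg) => [E|lt].
  by exists g; split; [rewrite -{2}E | exists g'].
by exists g'; split=> //; apply: IH => //; apply: leq_trans lt _.
Qed.

Lemma ADiter_stable t g :
  (#|disagreement g| < t)%N -> ADiter t.+1 [set g] = ADiter t [set g].
Proof.
move=> dg; apply/funext => h; apply/propext; rewrite !ADiterE.
split=> -[_ -> rh]; exists g => //.
  exact: ad_reach_drop_fixed.
exact: ad_reach_repeat_fixed.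
Qed.

Definition update_on (g : game) (U : {set pos}) : game :=
  MGame (actual g) (fun i w => if w \in U then actual g w else subj g i w).

Lemma update_on0 g : update_on g finset.set0 = g.
Proof.
case: g => a s; rewrite /update_on /=; congr MGame.
by apply/funext => i; apply/funext => w; rewrite inE.
Qed.

Lemma update_on_update g u U : update_on (update g u) U = update_on g (u |: U).
Proof.
rewrite /update_on /update /=; congr MGame.
apply/funext => i; apply/funext => w; rewrite !inE.
by case: (w \in U); case: (w =P u) => [->|]; rewrite ?orbT.
Qed.

Lemma ad_reach_update_on t g h : ad_reach t g h -> exists U, h = update_on g U.
Proof.
elim: t g h => [|t IH] g h /=; first by move=> ->; exists finset.set0; rewrite update_on0.
move=> [_ [[s [_ [u [_ ->]]]] /IH [U ->]]].
by exists (u |: U); rewrite update_on_update.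
Qed.

Lemma ADiter_finite t (g : game) : finite_set (ADiter t [set g]).
Proof.
apply: (@sub_finite_set _ _ (update_on g @` [set: {set pos}])).
  by move=> h /ADiterE [_ -> /ad_reach_update_on [U ->]]; exists U.
exact/finite_image/finite_finset.
Qed.

End Stabilization.

Theorem corollary1 (R : realType) (n m : nat) (g : mgame R n m) :
  exists L : nat, is_length [set g]%classic L /\ finite_set (ADiter L [set g]%classic).
Proof.
have [L HL] : exists L, is_length [set g] L.
  by apply: exists_length; exists (#|disagreement g|).+1; apply: ADiter_stable.
by exists L; split=> //; apply: ADiter_finite.
Qed.
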